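(* Let $\xi$ be any DoS sequence. Then $$\mathcal{D}^{\circ}(\xi) = (\inf \mathcal{D}(\xi), 1) \quad\text{and}\quad \mathcal{F}^{\circ}(\xi) = (\inf \mathcal{F}(\xi), +\infty),$$ where $\Omega^{\circ}$ denotes the interior of a set $\Omega$.
   Context: A DoS sequence $\xi=\{H_n\}$ is a finite or infinite sequence of sets $H_n := \{h_n\}\cup[h_n,h_n+\tau_n)$, where $h_1\geqslant 0$, $\tau_n\geqslant 0$ and $h_{n+1} > h_n+\tau_n$ for all $n$ (so the $H_n$ are pairwise disjoint). If $\xi$ has only $m$ elements, the convention $h_{m+1}=h_{m+1}+\tau_{m+1}=+\infty$ is used. For $0\leqslant \tau\leqslant s$ let $\Xi(\tau,s) := \bigcup_n H_n\cap[\tau,s]$ and $n_\xi(\tau,s) := \operatorname{card}(\{h_n\}_n\cap[\tau,s])$; $\lvert\cdot\rvert$ denotes Lebesgue measure. A constant $B_d\in[0,1]$ is a duration-bound of $\xi$ if there is a constant $0<\kappa<+\infty$ with $\lvert \Xi(0,t)\rvert\leqslant \kappa + B_d t$ for all $t\geqslant 0$. A constant $B_f\in[0,+\infty)$ is a frequency-bound of $\xi$ if there is an integer $0<\Lambda<+\infty$ with $n_\xi(0,t)\leqslant \Lambda + B_f t$ for all $t\geqslant 0$; if no such finite $B_f$ exists, the frequency-bound of $\xi$ is defined to be $B_f=+\infty$. $\mathcal{D}(\xi)\subseteq[0,1]$ denotes the set of all duration-bounds of $\xi$ and $\mathcal{F}(\xi)\subseteq[0,+\infty]$ the set of all frequency-bounds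 of $\xi$. *)

From HB Require Import structures.
From mathcomp Require Import all_boot all_order all_algebra.
From mathcomp Require Import all_classical all_reals all_analysis.
Set Implicit Arguments. Unset Strict Implicit. Unset Printing Implicit Defensive.
Import Order.TTheory GRing.Theory Num.Theory numFieldNormedType.Exports.
Local Open Scope classical_set_scope.
Local Open Scope ring_scope.

(* A DoS sequence: finitely many (len = Some m, indices n < m) or infinitely
   many (len = None) pairs (h_n, tau_n), indexed from 0. *)
Record DoS (R : realType) := MkDoS {
  dos_len : option nat;
  dos_h : nat -> R;
  dos_tau : nat -> R;
}.

Definition dos_valid (R : realType) (xi : DoS R) (n : nat) : Prop :=
  match dos_len xi with Some m => (n < m)%N | None => True end.

Definition is_DoS (R : realType) (xi : DoS R) : Prop :=
  (dos_valid xi 0 -> 0 <= dos_h xi 0) /\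
  (forall n, dos_valid xi n -> 0 <= dos_tau xi n) /\
  (forall n, dos_valid xi n.+1 -> dos_h xi n + dos_tau xi n < dos_h xi n.+1).

Definition Hset (R : realType) (xi : DoS R) (n : nat) : set R :=
  [set dos_h xi n] `|` [set x | dos_h xi n <= x < dos_h xi n + dos_tau xi n].

Definition Xi (R : realType) (xi : DoS R) (a s : R) : set R :=
  [set x | exists2 n, dos_valid xi n & Hset xi n x] `&` [set x | a <= x <= s].

Definition n_xi (R : realType) (xi : DoS R) (a s : R) : \bar R :=
  @counting R R [set x | (exists2 n, dos_valid xi n & x = dos_h xi n) /\ a <= x <= s].

Definition is_duration_bound (R : realType) (xi : DoS R) (Bd : R) : Prop :=
  0 <= Bd <= 1 /\
  exists kappa : R, 0 < kappa /\
    forall t : R, 0 <= t ->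
      (lebesgue_measure (Xi xi 0 t) <= (kappa + Bd * t)%:E)%E.

Definition is_finite_frequency_bound (R : realType) (xi : DoS R) (Bf : R) : Prop :=
  0 <= Bf /\
  exists Lambda : nat, (0 < Lambda)%N /\
    forall t : R, 0 <= t -> (n_xi xi 0 t <= (Lambda%:R + Bf * t)%:E)%E.

Definition Dset (R : realType) (xi : DoS R) : set R := is_duration_bound xi.

Definition Fset (R : realType) (xi : DoS R) : set (\bar R) :=
  [set b | (exists2 r : R, is_finite_frequency_bound xi r & b = r%:E) \/
           (b = +oo%E /\ ~ exists r : R, is_finite_frequency_bound xi r)].

(** Both kinds of bound are monotone in the rate: enlarging [B] only weakens
    the inequality [_ <= c + B t] for [t >= 0].  Hence the duration-bounds form
    an interval of [[0, 1]], which contains [1] because [|Xi(0, t)| <= t]; the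
    finite frequency-bounds form an up-ray of [[0, +oo)], and [F] is [{+oo}]
    exactly when that ray is empty.  The interior of a real interval is the
    open interval between its infimum and supremum.  None of the DoS axioms is
    needed. *)
From HB Require Import structures.
From mathcomp Require Import all_boot all_order all_algebra.
From mathcomp Require Import all_classical all_reals all_analysis.
Set Implicit Arguments.
Unset Strict Implicit.
Unset Printing Implicit Defensive.

Import Order.TTheory GRing.Theory Num.Theory numFieldNormedType.Exports.
Local Open Scope classical_set_scope.
Local Open Scope ring_scope.

Lemma affine_bound_le (R : realDomainType) (c x y t : R) :
  0 <= t -> x <= y -> c + x * t <= c + y * t.
Proof. by move=> t0 xy; rewrite lerD2l ler_wpM2r. Qed.

Section DoS_bounds.
Variables (R : realType) (xi : DoS R).

Lemma lebesgue_measure_Xi0_le (t : R) :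
  0 <= t -> (lebesgue_measure (Xi xi 0 t) <= t%:E)%E.
Proof.
move=> t0.
have Xi_sub : Xi xi 0 t `<=` (`[0, t] : set R).
  by move=> x [_ /= x0t]; rewrite in_itv.
have : (lebesgue_measure (Xi xi 0 t) <=
        lebesgue_measure (`[0%R, t]%classic : set R))%E.
  (* [Xi] is not shown measurable: monotonicity of the outer measure suffices. *)
  rewrite /lebesgue_measure /lebesgue_stieltjes_measure /measure_extension.
  exact: le_outer_measure.
move/le_trans; apply.
by rewrite lebesgue_measure_itv /=; case: ifP; rewrite ?oppr0 ?adde0 ?lee_fin.
Qed.

Lemma duration_bound1 : is_duration_bound xi 1.
Proof.
split; first by rewrite ler01 lexx.
exists 1; split=> // t t0; rewrite mul1r.
by apply: (le_trans (lebesgue_measure_Xi0_le t0)); rewrite lee_fin lerDr.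
Qed.

Lemma duration_bound_le (x y : R) :
  is_duration_bound xi x -> x <= y <= 1 -> is_duration_bound xi y.
Proof.
move=> [/andP[x0 _] [k [k0 hk]]] /andP[xy y1].
split; first by rewrite (le_trans x0 xy) y1.
exists k; split=> // t t0; apply: le_trans (hk t t0) _.
by rewrite lee_fin affine_bound_le.
Qed.

Lemma finite_frequency_bound_le (x y : R) :
  is_finite_frequency_bound xi x -> x <= y -> is_finite_frequency_bound xi y.
Proof.
move=> [x0 [L [L0 hL]]] xy; split; first exact: le_trans xy.
exists L; split=> // t t0; apply: le_trans (hL t t0) _.
by rewrite lee_fin affine_bound_le.
Qed.

Lemma is_interval_Dset : is_interval (Dset xi).
Proof.
move=> x y Dx [/andP[_ y1] _] z /andP[xz zy].
by apply: duration_bound_le Dx _; rewrite xz (le_trans zy y1).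
Qed.

Lemma has_lbound_Dset : has_lbound (Dset xi).
Proof. by exists 0 => x [/andP[]]. Qed.

Lemma has_ubound_Dset : has_ubound (Dset xi).
Proof. by exists 1 => x [/andP[]]. Qed.

Lemma sup_Dset : sup (Dset xi) = 1.
Proof.
apply/eqP; rewrite eq_le ge_sup.
- exact: ub_le_sup has_ubound_Dset _ duration_bound1.
- by exists 1; exact: duration_bound1.
- by move=> x [/andP[]].
Qed.

Lemma interior_Dset : (Dset xi)° = [set x | inf (Dset xi) < x < 1].
Proof.
rewrite interval_bounded_interior ?sup_Dset //.
- exact: is_interval_Dset.
- exact: has_lbound_Dset.
- exact: has_ubound_Dset.
Qed.

Lemma Fset_EFin : [set r : R | Fset xi r%:E] = is_finite_frequency_bound xi.
Proof.
apply/seteqP; split=> r /=; last by left; exists r.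
by case=> [[r' fr' [->]] | []].
Qed.

Lemma Fset_EFin_image : is_finite_frequency_bound xi !=set0 ->
  Fset xi = EFin @` is_finite_frequency_bound xi.
Proof.
move=> [r0 fr0]; apply/seteqP; split=> b /=.
- by case=> [[r fr ->] | [_ []]]; [exists r | exists r0].
- by case=> r fr <-; left; exists r.
Qed.

Lemma Fset_eq_pinfty : is_finite_frequency_bound xi = set0 -> Fset xi = [set +oo%E].
Proof.
move=> F0; apply/seteqP; split=> b /=.
- by case=> [[r fr _] | [-> _]] //; rewrite F0 in fr.
- by move=> ->; right; split=> // [[r]]; rewrite F0.
Qed.

Lemma has_lbound_finite_frequency_bounds :
  has_lbound (is_finite_frequency_bound xi).
Proof. by exists 0 => x []. Qed.

Lemma interior_finite_frequency_bounds : is_finite_frequency_bound xi !=set0 ->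
  (is_finite_frequency_bound xi)° = [set x | inf (is_finite_frequency_bound xi) < x].
Proof.
move=> [r0 fr0]; apply: interval_right_unbounded_interior.
- move=> x y fx _ z /andP[xz _]; exact: finite_frequency_bound_le fx xz.
- exact: has_lbound_finite_frequency_bounds.
- move=> [M ubM]; set y := Num.max r0 (M + 1).
  have /ubM : is_finite_frequency_bound xi y.
    by apply: finite_frequency_bound_le fr0 _; rewrite le_max lexx.
  by apply/negP; rewrite -ltNge lt_max ltrDl ltr01 orbT.
Qed.

End DoS_bounds.

Theorem proposition1 (R : realType) (xi : DoS R) :
  is_DoS xi ->
  interior (Dset xi) = [set x : R | inf (Dset xi) < x < 1] /\
  interior [set r : R | Fset xi r%:E] =
    [set x : R | (ereal_inf (Fset xi) < x%:E < +oo)%E].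
Proof.
move=> _; split; first exact: interior_Dset.
rewrite Fset_EFin.
have [F0 | /set0P Fne] := eqVneq (is_finite_frequency_bound xi) set0.
  rewrite F0 interior0 Fset_eq_pinfty // ereal_inf1.
  by apply/seteqP; split=> x //=; rewrite ltNge leey.
rewrite interior_finite_frequency_bounds // Fset_EFin_image //.
rewrite ereal_inf_EFin //; last exact: has_lbound_finite_frequency_bounds.
by apply/seteqP; split=> x /=; rewrite lte_fin ltry andbT.
Qed.
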